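(* Let $M$ be a monoid that satisfies, for every $n\ge1$, the identity $$xy_1^2y_2^2\cdots y_{n-1}^2y_n^2x\approx xy_1^2y_2^2\cdots y_{n-1}^2y_nxy_n.$$ If the $\lambda$-class $bta^+b^+$ is a $\lambda$-term for $M$, then $M$ is non-finitely based (the monoid variety generated by $M$ has no finite identity basis).
   Context: Words are elements of the free monoid $\mathfrak A^*$ over a countably infinite alphabet. Let $\tau_1$ be the congruence on $\mathfrak A^*$ generated by $a=aa$ for all letters $a$. Define $\mathbf u\,\lambda\,\mathbf v$ iff $\mathbf u\,\tau_1\,\mathbf v$, $\mathbf u,\mathbf v$ have the same set of letters occurring at least twice, and for each such letter its first two occurrences are adjacent in $\mathbf u$ iff they are adjacent in $\mathbf v$. The notation $bta^+b^+$ denotes the $\lambda$-class $\{bta^kb^m:k\ge2,m\ge1\}$. A $\lambda$-class $\mathtt u$ is a $\lambda$-term for $M$ if for every word $\mathbf u\in\mathtt u$ and every word $\mathbf v$ such that $M$ satisfies $\mathbf u\approx\mathbf v$, we have $\mathbf u\,\lambda\,\mathbf v$. *)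

From mathcomp Require Import all_boot.
Set Implicit Arguments. Unset Strict Implicit. Unset Printing Implicit Defensive.

Definition word := seq nat.

Definition is_monoid (M : Type) (op : M -> M -> M) (e : M) : Prop :=
  (forall x y z, op x (op y z) = op (op x y) z) /\
  (forall x, op e x = x) /\ (forall x, op x e = x).

Definition evalw (M : Type) (op : M -> M -> M) (e : M) (phi : nat -> M)
  (w : word) : M := foldr (fun a m => op (phi a) m) e w.

Definition satisfies (M : Type) (op : M -> M -> M) (e : M) (u v : word) : Prop :=
  forall phi : nat -> M, evalw op e phi u = evalw op e phi v.

Definition subst (s : nat -> word) (w : word) : word := flatten (map s w).

Inductive derivable (Sigma : seq (word * word)) : word -> word -> Prop :=
  | der_refl u : derivable Sigma u u
  | der_sym u v : derivable Sigma u v -> derivable Sigma v u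
  | der_trans u v w : derivable Sigma u v -> derivable Sigma v w -> derivable Sigma u w
  | der_step (p q : word) (s : nat -> word) (st : word * word) :
      st \in Sigma ->
      derivable Sigma (p ++ subst s st.1 ++ q) (p ++ subst s st.2 ++ q).

Definition finitely_based (M : Type) (op : M -> M -> M) (e : M) : Prop :=
  exists Sigma : seq (word * word),
    (forall st, st \in Sigma -> satisfies op e st.1 st.2) /\
    (forall u v, satisfies op e u v -> derivable Sigma u v).

Inductive tau1 : word -> word -> Prop :=
  | tau1_refl u : tau1 u u
  | tau1_sym u v : tau1 u v -> tau1 v u
  | tau1_trans u v w : tau1 u v -> tau1 v w -> tau1 u w
  | tau1_step (p q : word) (a : nat) : tau1 (p ++ [:: a] ++ q) (p ++ [:: a; a] ++ q).

Definition multiple (x : nat) (w : word) : bool := 1 < count_mem x w.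

Definition first_two_adjacent (x : nat) (w : word) : bool :=
  nth 0 w (index x w).+1 == x.

Definition lambda_rel (u v : word) : Prop :=
  tau1 u v /\
  (forall x, multiple x u = multiple x v) /\
  (forall x, multiple x u -> first_two_adjacent x u = first_two_adjacent x v).

Definition lambda_term (M : Type) (op : M -> M -> M) (e : M) (cls : word -> Prop) : Prop :=
  forall u v, cls u -> satisfies op e u v -> lambda_rel u v.

Definition class_btab (a b t : nat) (w : word) : Prop :=
  exists k m, 2 <= k /\ 1 <= m /\ w = [:: b; t] ++ nseq k a ++ nseq m b.

(* The identities  x y1^2 ... y_{n-1}^2 y_n^2 x ~ x y1^2 ... y_{n-1}^2 y_n x y_n,
   with x = letter 0 and y_i = letter i. *)
Definition squares_prefix (n : nat) : word :=
  0 :: flatten [seq [:: i; i] | i <- iota 1 n.-1].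
Definition idn_lhs (n : nat) : word := squares_prefix n ++ [:: n; n; 0].
Definition idn_rhs (n : nat) : word := squares_prefix n ++ [:: n; 0; n].

From mathcomp Require Import all_boot zify.
Set Implicit Arguments. Unset Strict Implicit. Unset Printing Implicit Defensive.

(* Let Sigma be a finite identity basis of M and let n > 1 exceed every letter
   of Sigma.  Call a word w n-good ([inS n w]) if its letters are exactly
   0, ..., n, the letters 1, ..., n occur in increasing order, some 0 precedes
   some 1, and after the first 0 both n and 0 occur, every n before every 0.
   The left side of the n-th identity is n-good and its right side is not.
   Since b t a^+ b^+ is a lambda-term, the identities of M preserve the content,
   the letters occurring once, and the property "every C-letter precedes every
   D-letter" for disjoint C and D (substitute aa for C and b for D, and test in
   the context b t _ b).  Hence every elementary step p s(l) q ~ p s(r) q with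
   (l, r) in Sigma preserves n-goodness.  The delicate case is when s(l)
   contains the first 0 and a later one: then s(l) contains all of 1, ..., n,
   so some letter z of l has two of them in s(z); z is then linear in l, and
   cutting s(z) with the linear letter t moves the first 0 from l to r. *)

Fixpoint before (C D : pred nat) (w : word) : bool :=
  if w is c :: w' then (D c ==> ~~ has C w') && before C D w' else true.

Lemma before_cat C D u v :
  before C D (u ++ v) = [&& before C D u, before C D v & ~~ (has D u && has C v)].
Proof.
elim: u => [|c u IH] /=; first by rewrite andbT.
rewrite IH has_cat.
by case: (D c); case: (has C u); case: (has C v); case: (has D u);
   case: (before C D u); case: (before C D v).
Qed.

Lemma before_split C D X Y : before C D (X ++ Y) -> has D X -> has C Y -> False.
Proof. by rewrite before_cat => /and3P[_ _ /negP nDC] DX CY; apply: nDC; rewrite DX. Qed.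

Lemma beforeP C D w :
  reflect (forall X Y, w = X ++ Y -> has D X -> has C Y -> False) (before C D w).
Proof.
apply: (iffP idP) => [Hw X Y Ew | Hw]; first by rewrite Ew in Hw; apply: before_split.
elim: w Hw => [|c w IH] //= Hw; apply/andP; split.
  by apply/implyP => Dc; apply/negP => Cw; apply: (Hw [:: c] w) => //=; rewrite Dc.
apply: IH => X Y Ew DX CY; apply: (Hw (c :: X) Y) => //=; first by rewrite Ew.
by rewrite DX orbT.
Qed.

Lemma before_nohasD C D w : ~~ has D w -> before C D w.
Proof. by elim: w => [|c w IH] //=; rewrite negb_or => /andP[/negPf-> /IH->]. Qed.

Lemma before_nohasC C D w : ~~ has C w -> before C D w.
Proof.
by elim: w => [|c w IH] //=; rewrite negb_or => /andP[_ nCw]; rewrite nCw implybT IH.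
Qed.

Lemma before_sub C C' D D' w :
  subpred C' C -> subpred D' D -> before C D w -> before C' D' w.
Proof.
move=> sC sD /beforeP Hw; apply/beforeP => X Y Ew DX CY.
by apply: (Hw X Y Ew); [apply: sub_has DX | apply: sub_has CY].
Qed.

Lemma before_infix C D p u q : before C D (p ++ u ++ q) -> before C D u.
Proof. by rewrite !before_cat => /and3P[_ /and3P[]]. Qed.

Lemma split_first_pred (P : pred nat) s : has P s ->
  exists s1 x s2, [/\ s = s1 ++ x :: s2, P x & ~~ has P s1].
Proof. by case/split_find=> x s1 s2 Px nPs1; exists s1, x, s2; rewrite cat_rcons. Qed.

Lemma split_first (x : nat) s : x \in s -> exists s1 s2, s = s1 ++ x :: s2 /\ x \notin s1.
Proof.
rewrite -has_pred1 => /split_find[y s1 s2 /eqP-> nxs1].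
by exists s1, s2; rewrite cat_rcons has_pred1 in nxs1 *.
Qed.

Lemma split_first_uniq (c : nat) w1 w2 v1 v2 : w1 ++ c :: w2 = v1 ++ c :: v2 ->
  c \notin w1 -> c \notin v1 -> w1 = v1 /\ w2 = v2.
Proof.
move=> E cNw1 cNv1; have size_eq : size w1 = size v1.
  have := congr1 (index c) E.
  by rewrite !index_cat (negbTE cNw1) (negbTE cNv1) /= eqxx !addn0.
by move/eqP: E; rewrite eqseq_cat // eqseq_cons eqxx => /andP[/eqP-> /eqP->].
Qed.

Lemma count1_split (x : nat) s : count_mem x s = 1 ->
  exists s1 s2, [/\ s = s1 ++ x :: s2, x \notin s1 & x \notin s2].
Proof.
move=> cx; have [|s1 [s2 [Es xNs1]]] := @split_first x s.
  by rewrite -has_pred1 has_count cx.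
exists s1, s2; split=> //; apply/count_memPn.
by move: cx; rewrite Es count_cat /= eqxx (count_memPn xNs1) => -[].
Qed.

Lemma subst_cons s c u : subst s (c :: u) = s c ++ subst s u.
Proof. by []. Qed.

Lemma subst_cat s u v : subst s (u ++ v) = subst s u ++ subst s v.
Proof. by rewrite /subst map_cat flatten_cat. Qed.

Lemma subst_subst s s' w : subst s' (subst s w) = subst (fun y => subst s' (s y)) w.
Proof. by elim: w => [|y w IH] //; rewrite !subst_cons subst_cat IH. Qed.

Lemma before_subst_linear i j z sg s1 s2 :
  before (pred1 i) (pred1 j) (subst sg (s1 ++ z :: s2)) ->
  i \in sg z -> j \in sg z -> z \notin s2.
Proof.
rewrite subst_cat subst_cons catA => /before_split bef iz jz; apply/negP => zs2.
apply: bef; first by rewrite has_cat !has_pred1 jz orbT.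
by rewrite has_pred1; apply/flatten_mapP; exists z.
Qed.

Lemma pigeonhole_subst (sg : nat -> word) (l : word) N n :
  (forall y, y \in l -> y < N) -> N < n -> (forall i, 0 < i <= n -> i \in subst sg l) ->
  exists z j k, [/\ z \in l, 0 < j, j < k, k <= n & (j \in sg z) && (k \in sg z)].
Proof.
move=> lt_l_N lt_N_n covered.
pose f (i : nat) := nth 0 l (find (fun z => i \in sg z) l).
have f_spec i : 0 < i <= n -> f i \in l /\ i \in sg (f i).
  move=> /covered /flatten_mapP[z zl iz].
  have hz : has (fun z => i \in sg z) l by apply/hasP; exists z.
  by split; [apply: mem_nth; rewrite -has_find | apply: (nth_find 0 hz)].
have f_range : {subset map f (iota 1 n) <= iota 0 N}.
  move=> y /mapP[i]; rewrite mem_iota add1n ltnS => /f_spec[fl _] ->.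
  by rewrite mem_iota lt_l_N.
have : ~~ uniq (map f (iota 1 n)).
  apply/negP => /uniq_leq_size/(_ f_range).
  by rewrite size_map !size_iota leqNgt lt_N_n.
case/(uniqPn 0)=> i [k [lt_ik]]; rewrite size_map size_iota => lt_kn.
rewrite !(nth_map 0) ?size_iota ?nth_iota; try lia.
move=> Ef; have [fl ij] := f_spec (1 + i) ltac:(lia).
have [_ kj] := f_spec (1 + k) ltac:(lia).
exists (f (1 + i)), (1 + i), (1 + k); split=> //; try lia.
by rewrite ij Ef kj.
Qed.

Section Satisfies.
Variables (M : Type) (op : M -> M -> M) (e : M).
Hypothesis monoidM : is_monoid op e.

Lemma evalw_cat phi u v :
  evalw op e phi (u ++ v) = op (evalw op e phi u) (evalw op e phi v).
Proof.
have [opA [op1x _]] := monoidM.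
by elim: u => [|c u IH] /=; rewrite ?op1x // IH opA.
Qed.

Lemma evalw_subst phi s u :
  evalw op e phi (subst s u) = evalw op e (fun c => evalw op e phi (s c)) u.
Proof. by elim: u => [|c u IH] //=; rewrite evalw_cat IH. Qed.

Lemma satisfies_sym u v : satisfies op e u v -> satisfies op e v u.
Proof. by move=> Huv phi; rewrite Huv. Qed.

Lemma satisfies_subst s u v :
  satisfies op e u v -> satisfies op e (subst s u) (subst s v).
Proof. by move=> Huv phi; rewrite !evalw_subst Huv. Qed.

Lemma satisfies_ctx p q u v :
  satisfies op e u v -> satisfies op e (p ++ u ++ q) (p ++ v ++ q).
Proof. by move=> Huv phi; rewrite !evalw_cat Huv. Qed.

End Satisfies.

Lemma derivable_invariant (Sigma : seq (word * word)) (P : word -> Prop) :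
  (forall st p q s, st \in Sigma ->
     P (p ++ subst s st.1 ++ q) <-> P (p ++ subst s st.2 ++ q)) ->
  forall u v, derivable Sigma u v -> P u <-> P v.
Proof.
move=> stepP u v; elim=> {u v} [// | u v _ IH | u v w _ IH1 _ IH2 | p q s st /stepP //].
- by rewrite IH.
- by rewrite IH1 IH2.
Qed.

Fixpoint destutter_from (c : nat) (w : word) : word :=
  if w is d :: w' then
    if d == c then destutter_from c w' else d :: destutter_from d w'
  else [::].

Definition destutter (w : word) : word :=
  if w is c :: w' then c :: destutter_from c w' else [::].

Lemma destutter_dup p x q : destutter (p ++ x :: q) = destutter (p ++ [:: x, x & q]).
Proof.
have dupE c s : destutter_from c (s ++ x :: q) = destutter_from c (s ++ [:: x, x & q]).
  elim: s c => [|d s IH] c /=; last by case: (d == c); rewrite IH.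
  by case: (x == c) => /=; rewrite ?eqxx.
by case: p => [|d p] /=; rewrite ?eqxx ?dupE.
Qed.

Lemma tau1_destutter u v : tau1 u v -> destutter u = destutter v.
Proof.
by elim=> [// | u' v' _ -> // | u' v' w' _ -> _ -> // | p q x]; apply: destutter_dup.
Qed.

Lemma destutter_from_nseq c i w : destutter_from c (nseq i c ++ w) = destutter_from c w.
Proof. by elim: i => [|i IH] //=; rewrite eqxx. Qed.

Lemma destutter_from_nil c w : destutter_from c w = [::] -> w = nseq (size w) c.
Proof.
elim: w => [|d w IH] //=; case: eqP => [-> /IH {1}-> // | _] //.
Qed.

Lemma destutter_from_cons c w d s : destutter_from c w = d :: s ->
  exists i w', w = nseq i c ++ d :: w' /\ destutter_from d w' = s.
Proof.
elim: w => [|d' w IH] //=; case: eqP => [-> /IH [i [w' [-> <-]]] | _ [<- <-]].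
  by exists i.+1, w'.
by exists 0, w.
Qed.

Lemma destutter_eq4 v x1 x2 x3 x4 : destutter v = [:: x1; x2; x3; x4] ->
  exists i1 i2 i3 i4,
    v = x1 :: nseq i1 x1 ++ x2 :: nseq i2 x2 ++ x3 :: nseq i3 x3 ++ x4 :: nseq i4 x4.
Proof.
case: v => [|c v] //= [<-] /destutter_from_cons[i1 [v1 [->]]].
move=> /destutter_from_cons[i2 [v2 [->]]].
move=> /destutter_from_cons[i3 [v3 [-> /destutter_from_nil ->]]].
by exists i1, i2, i3, (size v3).
Qed.

Definition btab_pair (C D : pred nat) (X1 X2 : word) : bool :=
  [&& ~~ has C X1, count D X1 == 1, before C D X2, has C X2 & has D X2].

Definition zero_split (n : nat) (w : word) : bool :=
  let i := index 0 w in let w2 := drop i.+1 w in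
  [&& n \notin take i w, before (pred1 n) (pred1 0) w2, n \in w2 & 0 \in w2].

Lemma zero_split_cat n w1 w2 : 0 \notin w1 ->
  zero_split n (w1 ++ 0 :: w2) =
  [&& n \notin w1, before (pred1 n) (pred1 0) w2, n \in w2 & 0 \in w2].
Proof.
move=> zNw1; rewrite /zero_split index_cat (negbTE zNw1) /= addn0.
by rewrite take_size_cat // -cat_rcons drop_size_cat ?size_rcons.
Qed.

Lemma zero_split_mem0 n w : zero_split n w -> 0 \in w.
Proof. by case/and4P=> _ _ _ /mem_drop. Qed.

Lemma zero_split_btab_pair n (P : pred nat) p X1 X2 q :
  P n -> 0 \notin p -> n \notin p ->
  before (pred1 n) (pred1 0) q -> n \notin q ->
  btab_pair P (pred1 0) X1 X2 -> n \in X1 ++ X2 -> zero_split n (p ++ (X1 ++ X2) ++ q).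
Proof.
move=> Pn zNp nNp nq nNq /and5P[P1 /eqP c01 P02 _ z2].
have nX1 : n \notin X1 by apply: contra P1 => nX1; apply/hasP; exists n.
rewrite mem_cat (negbTE nX1) /= => nX2.
have [X1a [X1b [EX1 zNX1a zNX1b]]] := count1_split c01; subst X1.
have -> : p ++ ((X1a ++ 0 :: X1b) ++ X2) ++ q = (p ++ X1a) ++ 0 :: X1b ++ X2 ++ q.
  by rewrite -!catA.
rewrite zero_split_cat; last by rewrite mem_cat negb_or zNp.
apply/and4P; split.
- by rewrite mem_cat negb_or nNp; apply: contra nX1; rewrite mem_cat => ->.
- have nNX1b : n \notin X1b.
    by apply: contra nX1; rewrite mem_cat inE => ->; rewrite !orbT.
  rewrite !before_cat nq before_nohasD ?has_pred1 //= (before_sub _ _ P02) //=.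
    by rewrite (negbTE zNX1b) (negbTE nNq) !andbF.
  by move=> y /eqP->.
- by rewrite !mem_cat nX2 orbT.
- by rewrite !mem_cat -(has_pred1 0 X2) z2 !orbT.
Qed.

Definition inS (n : nat) (w : word) : Prop :=
  [/\ forall c, (c \in w) = (c <= n),
      forall i j, 0 < i -> i < j -> j <= n -> before (pred1 i) (pred1 j) w,
      ~~ before (pred1 1) (pred1 0) w
    & zero_split n w].

Section LambdaTerm.
Variables (M : Type) (op : M -> M -> M) (e : M).
Hypothesis monoidM : is_monoid op e.
Variables a b t : nat.
Hypotheses (neq_ab : a != b) (neq_at : a != t) (neq_bt : b != t).
Hypothesis lambdaM : lambda_term op e (class_btab a b t).

Lemma btab_closed u v :
  satisfies op e u v -> class_btab a b t u -> class_btab a b t v.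
Proof.
move=> Huv Cu; have [tau_uv [mult_uv adj_uv]] := lambdaM Cu Huv.
case: Cu => k [m [k2 [m1 Eu]]].
have neq_ba : b != a by rewrite eq_sym.
have neq_ta : t != a by rewrite eq_sym.
have neq_tb : t != b by rewrite eq_sym.
have : destutter v = [:: b; t; a; b].
  rewrite -(tau1_destutter tau_uv) Eu.
  case: k k2 {Eu} => [|[|k]] // _; case: m m1 => [|m] // _.
  rewrite /= (negbTE neq_tb) (negbTE neq_at) eqxx destutter_from_nseq /=.
  by rewrite (negbTE neq_ba) -[nseq m b]cats0 destutter_from_nseq.
case/destutter_eq4 => i1 [i2 [i3 [i4 Ev]]].
move: (mult_uv t) (mult_uv a) (adj_uv b); subst u v; clear Huv tau_uv mult_uv adj_uv.
rewrite /multiple /first_two_adjacent; do 4 rewrite /= ?count_cat ?count_nseq.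
rewrite /= !eqxx (negbTE neq_ab) (negbTE neq_at) (negbTE neq_bt) (negbTE neq_ba).
rewrite (negbTE neq_ta) (negbTE neq_tb) /= ?mul0n ?mul1n ?add0n ?addn0.
case: i2 => [_|i2]; last by rewrite addnS.
case: i3 => [|i3 _]; first by rewrite addn0 k2.
case: i1 => [_|i1 /(_ m1)]; last by rewrite /= eqxx.
by exists i3.+2, i4.+1.
Qed.

Lemma btab_ctx p q s u v : satisfies op e u v ->
  class_btab a b t (p ++ subst s u ++ q) -> class_btab a b t (p ++ subst s v ++ q).
Proof. by move=> Huv; apply/btab_closed/satisfies_ctx/satisfies_subst. Qed.

Lemma btab_count_t w : class_btab a b t w -> count_mem t w = 1.
Proof.
case=> k [m [_ [_ ->]]]; rewrite /= count_cat !count_nseq /= eqxx.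
by rewrite (negbTE neq_at) (negbTE neq_bt) !mul0n.
Qed.

Lemma btab_split X Y : t \notin X -> class_btab a b t (X ++ t :: Y) ->
  X = [:: b] /\ exists k m, [/\ 1 < k, 0 < m & Y = nseq k a ++ nseq m b].
Proof.
move=> tX [k [m [k2 [m1]]]]; case: X tX => [|x [|y X]] /=.
- by move=> _ [/eqP]; rewrite eq_sym (negbTE neq_bt).
- by move=> _ [-> ->]; split => //; exists k, m.
- by rewrite !inE => /norP[_ /norP[/negP tNy _]] [_ Ey]; rewrite Ey eqxx in tNy.
Qed.

Lemma before_nseq_ab k m : before (pred1 a) (pred1 b) (nseq k a ++ nseq m b).
Proof.
by rewrite before_cat before_nohasD ?before_nohasC ?has_nseq /= ?(eq_sym b)
  ?(negbTE neq_ab) ?andbF.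
Qed.

Section ABSubst.
Variables C D : pred nat.
Hypothesis disjCD : forall y, C y -> ~~ D y.

Definition ab_subst (y : nat) : word :=
  if C y then [:: a; a] else if D y then [:: b] else [::].

Lemma ab_subst_before X : before C D X ->
  subst ab_subst X = nseq (2 * count C X) a ++ nseq (count D X) b.
Proof.
elim: X => [|c X IH] //; rewrite subst_cons => /andP[DcNC /IH ->]; rewrite /ab_subst /=.
case Cc: (C c); first by rewrite (negbTE (disjCD Cc)) mulnDr muln1.
case Dc: (D c) => //=; move: DcNC; rewrite Dc has_count -leqNgt leqn0 => /eqP->.
by rewrite muln0.
Qed.

Lemma has_ab_subst_a X : has (pred1 a) (subst ab_subst X) = has C X.
Proof.
elim: X => [|c X IH] //; rewrite subst_cons has_cat IH /ab_subst /=.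
by case: (C c); case: (D c); rewrite /= ?eqxx ?(eq_sym b) ?(negbTE neq_ab).
Qed.

Lemma count_ab_subst_b X : count_mem b (subst ab_subst X) = count D X.
Proof.
elim: X => [|c X IH] //; rewrite subst_cons count_cat IH /ab_subst /=.
case Cc: (C c); first by rewrite (negbTE (disjCD Cc)) /= (negbTE neq_ab).
by case: (D c); rewrite /= ?eqxx.
Qed.

Lemma t_notin_ab_subst X : t \notin subst ab_subst X.
Proof.
elim: X => [|c X IH] //; rewrite subst_cons mem_cat negb_or IH andbT /ab_subst.
by case: (C c); case: (D c); rewrite ?inE ?negb_or ?(eq_sym t) ?neq_at ?neq_bt.
Qed.

Lemma before_ab_subst X : before (pred1 a) (pred1 b) (subst ab_subst X) -> before C D X.
Proof.
elim: X => [|c X IH] //; rewrite subst_cons before_cat /= => /and3P[_ /IH -> /negP abX].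
rewrite andbT; apply/implyP => Dc; apply/negP => CX; apply: abX.
have nCc : ~~ C c by apply: contraL Dc; apply: disjCD.
by rewrite /ab_subst (negbTE nCc) Dc /= eqxx has_ab_subst_a.
Qed.

Lemma satisfies_before_has u v : satisfies op e u v ->
  before C D u -> has C u -> before C D v && has C v.
Proof.
move=> Huv CDu Cu.
(* Doubling the a's puts every word with a C-letter into the class. *)
have : class_btab a b t ([:: b; t] ++ subst ab_subst u ++ [:: b]).
  exists (2 * count C u), (count D u + 1).
  rewrite ab_subst_before // nseqD -catA addn1; split => //.
  by move: Cu; rewrite has_count; lia.
case/(btab_ctx Huv) => k [m [k2 [_ [Ev]]]].
have abv : before (pred1 a) (pred1 b) (subst ab_subst v ++ [:: b]).
  by rewrite Ev before_nseq_ab.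
rewrite before_ab_subst; last by move: abv; rewrite before_cat => /and3P[].
rewrite -has_ab_subst_a has_pred1.
have : a \in subst ab_subst v ++ [:: b] by rewrite Ev mem_cat mem_nseq eqxx (ltnW k2).
by rewrite mem_cat inE (negbTE neq_ab) orbF.
Qed.

Lemma btab_pairP X1 X2 :
  class_btab a b t (subst ab_subst X1 ++ t :: subst ab_subst X2) <-> btab_pair C D X1 X2.
Proof.
split.
  case/btab_split=> [|ab1 [k [m [k2 m1 ab2]]]]; first exact: t_notin_ab_subst.
  apply/and5P; split.
  - by rewrite -has_ab_subst_a ab1 /= (eq_sym b) (negbTE neq_ab).
  - by rewrite -count_ab_subst_b ab1 /= eqxx.
  - by rewrite before_ab_subst // ab2 before_nseq_ab.
  - by rewrite -has_ab_subst_a ab2 has_cat has_nseq /= eqxx (ltnW k2).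
  - rewrite has_count -count_ab_subst_b ab2 count_cat !count_nseq /= eqxx.
    by rewrite (negbTE neq_ab) mul0n mul1n.
case/and5P=> nC1 /eqP D1 CD2 C2 D2; exists (2 * count C X2), (count D X2).
rewrite ab_subst_before ?before_nohasC // ab_subst_before // D1.
move: nC1 C2 D2; rewrite !has_count -leqNgt leqn0 => /eqP-> C2 D2.
by split; [lia | split].
Qed.

End ABSubst.

Lemma satisfies_has (P : pred nat) u v : satisfies op e u v -> has P u -> has P v.
Proof.
move=> Huv Pu; have disj (y : nat) : P y -> ~~ pred0 y by [].
by case/andP: (satisfies_before_has disj Huv (before_nohasD _ (negbT (has_pred0 u))) Pu).
Qed.

Lemma satisfies_mem x u v : satisfies op e u v -> (x \in u) = (x \in v).
Proof.
move=> Huv; rewrite -!has_pred1; apply/idP/idP.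
  exact: satisfies_has Huv.
exact: satisfies_has (satisfies_sym Huv).
Qed.

Lemma satisfies_before (C D : pred nat) u v : (forall y, C y -> ~~ D y) ->
  satisfies op e u v -> before C D u -> before C D v.
Proof.
move=> disj Huv CDu; have [Cu | nCu] := boolP (has C u).
  by case/andP: (satisfies_before_has disj Huv CDu Cu).
by apply: before_nohasC; apply: contra nCu; apply: satisfies_has (satisfies_sym Huv).
Qed.

Lemma satisfies_count1 (x : nat) u v :
  satisfies op e u v -> count_mem x u = 1 -> count_mem x v = 1.
Proof.
move=> Huv cxu; pose s (y : nat) : word := if y == x then [:: t] else [::].
have substE w : subst s w = nseq (count_mem x w) t.
  by elim: w => [|y w IH] //; rewrite subst_cons IH /s /=; case: (y == x).
have /btab_count_t : class_btab a b t ([:: b] ++ subst s v ++ [:: a; a; b]).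
  by apply: (btab_ctx Huv); rewrite substE cxu; exists 2, 1.
rewrite substE !count_cat count_nseq /= eqxx (negbTE neq_at) (negbTE neq_bt) /=.
by rewrite mul1n add0n addn0.
Qed.

Lemma satisfies_btab_pair (C D : pred nat) l r sg z s1 s2 u v :
  (forall y, C y -> ~~ D y) -> satisfies op e l r ->
  l = s1 ++ z :: s2 -> z \notin s1 -> z \notin s2 -> sg z = u ++ v ->
  btab_pair C D (subst sg s1 ++ u) (v ++ subst sg s2) ->
  exists r1 r2, [/\ r = r1 ++ z :: r2, z \notin r1, z \notin r2
                 & btab_pair C D (subst sg r1 ++ u) (v ++ subst sg r2)].
Proof.
move=> disj Hlr El zNs1 zNs2 Ez pair_l; pose psi := ab_subst C D.
(* [th] is [psi] after [sg], except that it marks the cut of [sg z] by the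
   letter t; as t is linear in b t a^+ b^+, z stays linear in r. *)
pose th (y : nat) : word :=
  if y == z then subst psi u ++ t :: subst psi v else subst psi (sg y).
have thE w : z \notin w -> subst th w = subst psi (subst sg w).
  rewrite subst_subst; elim: w => [|y w IH] //.
  by rewrite !subst_cons inE negb_or => /andP[zy /IH->]; rewrite /th eq_sym (negbTE zy).
have th_split w1 w2 : z \notin w1 -> z \notin w2 -> subst th (w1 ++ z :: w2) =
    subst psi (subst sg w1 ++ u) ++ t :: subst psi (v ++ subst sg w2).
  by move=> zNw1 zNw2; rewrite !subst_cat subst_cons !thE // /th eqxx -!catA.
have count_th w : count_mem t (subst th w) = count_mem z w.
  elim: w => [|y w IH] //; rewrite subst_cons count_cat IH /th; congr (_ + _).
  have [->|zNy] /= := eqVneq y z.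
    by rewrite count_cat /= !eqxx !(count_memPn (t_notin_ab_subst _ _ _)).
  by rewrite (negbTE zNy); apply/count_memPn/t_notin_ab_subst.
have Hc := btab_ctx (p := [::]) (q := [::]) (s := th) Hlr; rewrite /= !cats0 in Hc.
have class_r : class_btab a b t (subst th r).
  by apply: Hc; rewrite El th_split //; apply/btab_pairP.
have [|r1 [r2 [Er zNr1 zNr2]]] := @count1_split z r.
  by rewrite -count_th btab_count_t.
by exists r1, r2; split=> //; apply/(btab_pairP disj); rewrite -th_split -?Er.
Qed.

Section ZeroSplitCtx.
Variables (n : nat) (p q x y : word).
Hypotheses (n_neq0 : n != 0) (Hxy : satisfies op e x y).

Let n_not0 : forall c, pred1 n c -> ~~ pred1 0 c.
Proof. by move=> c /eqP->. Qed.

Lemma zero_split_ctx_prefix :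
  0 \in p -> zero_split n (p ++ x ++ q) -> zero_split n (p ++ y ++ q).
Proof.
case/split_first=> p1 [p2 [-> zNp1]]; rewrite -!catA /= !zero_split_cat //.
have Hw := satisfies_ctx monoidM p2 q Hxy.
case/and4P=> -> /(satisfies_before n_not0 Hw) -> nw zw /=.
by rewrite -!(satisfies_mem _ Hw) nw zw.
Qed.

Lemma zero_split_ctx_nozero :
  0 \notin p ++ x -> zero_split n (p ++ x ++ q) -> zero_split n (p ++ y ++ q).
Proof.
move=> zNpx zs; have : 0 \in q.
  by move: (zero_split_mem0 zs) zNpx; rewrite catA mem_cat => /orP[->|].
case/split_first=> q1 [q2 [Eq zNq1]]; move: zs; rewrite Eq.
have memE c : (c \in (p ++ x) ++ q1) = (c \in (p ++ y) ++ q1).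
  by rewrite !mem_cat (satisfies_mem _ Hxy).
by rewrite !catA !zero_split_cat -?memE // mem_cat negb_or zNpx.
Qed.

Lemma zero_split_ctx_once : 0 \notin p -> count_mem 0 x = 1 ->
  zero_split n (p ++ x ++ q) -> zero_split n (p ++ y ++ q).
Proof.
move=> zNp /[dup] cx /(satisfies_count1 Hxy) cy.
have [x1 [x2 [Ex zNx1 zNx2]]] := count1_split cx.
have [y1 [y2 [Ey zNy1 zNy2]]] := count1_split cy.
have splitE w1 w2 : p ++ (w1 ++ 0 :: w2) ++ q = (p ++ w1) ++ 0 :: w2 ++ q.
  by rewrite -!catA.
have zNpw w : 0 \notin w -> 0 \notin p ++ w by rewrite mem_cat negb_or zNp.
rewrite Ex Ey !splitE !zero_split_cat ?zNpw //.
case/and4P; rewrite mem_cat negb_or => /andP[nNp nNx1] x2q n_x2q z_x2q.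
have zq : 0 \in q by move: z_x2q; rewrite mem_cat (negbTE zNx2).
have Hn0 : before (pred1 0) (pred1 n) y.
  apply: satisfies_before Hxy _; first by move=> c /eqP->; rewrite /= eq_sym.
  rewrite Ex before_cat /= before_nohasD ?before_nohasC ?has_pred1 //=.
  by rewrite zNx2 implybT (negbTE nNx1).
have nNy1 : n \notin y1.
  apply/negP => ny1; move: Hn0; rewrite Ey => /before_split.
  by apply; rewrite has_pred1 ?inE ?eqxx.
apply/and4P; split.
- by rewrite mem_cat negb_or nNp.
- move: x2q; rewrite !before_cat => /and3P[_ -> _].
  by rewrite before_nohasD ?has_pred1 ?(negbTE zNy2).
- move: n_x2q; rewrite !mem_cat => /orP[nx2 | ->]; last by rewrite orbT.
  have : n \in y by rewrite -(satisfies_mem _ Hxy) Ex mem_cat inE nx2 !orbT.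
  by rewrite Ey mem_cat inE (negbTE n_neq0) /= => /orP[ny1 | ->] //; rewrite ny1 in nNy1.
- by rewrite mem_cat zq orbT.
Qed.
End ZeroSplitCtx.

Section FirstZeroInFactor.
Variables (n N : nat) (l r : word) (sg : nat -> word) (p q m1 m2 : word).
Local Notation w := (p ++ subst sg l ++ q).
Local Notation above j := (fun y => j < y).
Hypotheses (Hlr : satisfies op e l r) (lt_l_N : forall y, y \in l -> y < N)
  (lt_N_n : N < n) (n_gt1 : 1 < n).
Hypotheses (contents : forall c, (c \in w) = (c <= n))
  (ordered : forall i j, 0 < i -> i < j -> j <= n -> before (pred1 i) (pred1 j) w)
  (zero_before_one : ~~ before (pred1 1) (pred1 0) w).
Hypotheses (Em : subst sg l = m1 ++ 0 :: m2) (zNp : 0 \notin p) (zNm1 : 0 \notin m1)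
  (nNp : n \notin p) (n_before_0 : before (pred1 n) (pred1 0) (m2 ++ q))
  (n_m2q : n \in m2 ++ q) (z_m2 : 0 \in m2).

Let wE : w = (p ++ m1) ++ 0 :: m2 ++ q.
Proof. by rewrite Em -!catA. Qed.

Lemma no_inversion X Y i j : w = X ++ Y ->
  0 < i -> i < j -> j <= n -> j \in X -> i \in Y -> False.
Proof.
move=> E i_gt0 lt_ij le_jn jX iY; apply: (@before_split (pred1 i) (pred1 j) X Y).
- by rewrite -E; apply: ordered.
- by rewrite has_pred1.
- by rewrite has_pred1.
Qed.

Lemma no_greater_before X Y j : w = X ++ Y -> 0 < j -> j \in Y -> ~~ has (above j) X.
Proof.
move=> E j_gt0 jY; apply/hasP => -[y yX lt_jy].
apply: (no_inversion E j_gt0 lt_jy _ yX jY).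
by rewrite -contents E mem_cat yX.
Qed.

Lemma n_in_m2 : n \in m2.
Proof.
move: n_m2q; rewrite mem_cat => /orP[// | nq]; exfalso.
by apply: (before_split n_before_0); rewrite has_pred1.
Qed.

Lemma one_in_m2 : 1 \in m2.
Proof.
have zNX : ~~ has (pred1 0) (p ++ m1) by rewrite has_pred1 mem_cat negb_or zNp.
have : 1 \in m2 ++ q.
  apply: contraR zero_before_one => oneN.
  rewrite wE before_cat (before_nohasD _ zNX) before_nohasC ?(negbTE zNX) //.
  by rewrite has_pred1 inE.
rewrite mem_cat => /orP[// | one_q]; exfalso.
apply: (no_inversion (X := (p ++ m1) ++ 0 :: m2) (Y := q) _ _ n_gt1 (leqnn n)) => //.
- by rewrite wE -!catA.
- by rewrite mem_cat inE n_in_m2 !orbT.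
Qed.

Lemma mem_m2 i : 0 < i -> i <= n -> i \in m2.
Proof.
move=> i_gt0 le_in; have [-> | i_neq1] := eqVneq i 1; first exact: one_in_m2.
have [-> | i_neqn] := eqVneq i n; first exact: n_in_m2.
have : i \in w by rewrite contents.
rewrite wE mem_cat => /orP[iX | ];
  last rewrite inE mem_cat => /or3P[/eqP i0 | // | iq]; exfalso.
- apply: (no_inversion (X := p ++ m1) (Y := 0 :: m2 ++ q) (i := 1) wE isT _ le_in) => //.
    by rewrite ltn_neqAle eq_sym i_neq1.
  by rewrite inE mem_cat one_in_m2 orbT.
- by rewrite i0 in i_gt0.
- apply: (no_inversion (X := (p ++ m1) ++ 0 :: m2) (Y := q) _ i_gt0 _ (leqnn n)) => //.
  + by rewrite wE -!catA.
  + by rewrite ltn_neqAle i_neqn.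
  + by rewrite mem_cat inE n_in_m2 !orbT.
Qed.

Lemma first_zero_cut L y0 R : subst sg l = L ++ y0 :: R -> 1 < y0 ->
  exists L2, L = m1 ++ 0 :: L2 /\ m2 = L2 ++ y0 :: R.
Proof.
move=> EL y0_gt1; have [zL | zNL] := boolP (0 \in L).
  have [L1 [L2 [EL1 zNL1]]] := split_first zL; exists L2.
  have E : m1 ++ 0 :: m2 = L1 ++ 0 :: L2 ++ y0 :: R by rewrite -Em EL EL1 -catA.
  by have [-> ->] := split_first_uniq E zNm1 zNL1.
have : 0 \in R.
  have : 0 \in subst sg l by rewrite Em mem_cat inE eqxx orbT.
  rewrite EL mem_cat inE (negbTE zNL) /=.
  by case: eqP => // y00; rewrite -y00 in y0_gt1.
case/split_first=> R1 [R2 [ER zNR1]]; exfalso.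
have E : m1 ++ 0 :: m2 = (L ++ y0 :: R1) ++ 0 :: R2 by rewrite -Em EL ER -catA.
have [|Em1 _] := split_first_uniq E zNm1.
  by rewrite mem_cat inE !negb_or zNL zNR1 andbT; apply: contraTneq y0_gt1 => <-.
apply: (no_inversion (X := p ++ m1) (Y := 0 :: m2 ++ q) (i := 1) wE isT y0_gt1).
- by rewrite -contents EL !mem_cat inE eqxx !orbT.
- by rewrite Em1 !mem_cat inE eqxx !orbT.
- by rewrite inE mem_cat one_in_m2 orbT.
Qed.

Lemma cut_btab_pair L y0 R j : subst sg l = L ++ y0 :: R -> 0 < j -> j < y0 ->
  ~~ has (above j) L -> btab_pair (above j) (pred1 0) L (y0 :: R).
Proof.
move=> EL j_gt0 lt_jy0 nL.
have y0n : y0 <= n by rewrite -contents EL !mem_cat inE eqxx !orbT.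
have [L2 [EL2 Em2]] := first_zero_cut EL (leq_ltn_trans j_gt0 lt_jy0).
have nNL : n \notin L.
  by apply: contra nL => nL; apply/hasP; exists n => //; apply: leq_trans lt_jy0 y0n.
have nNL2 : n \notin L2.
  by apply: contra nNL; rewrite EL2 mem_cat inE => ->; rewrite !orbT.
have nR : n \in y0 :: R by move: n_in_m2; rewrite Em2 mem_cat (negbTE nNL2).
have zNL2 : 0 \notin L2.
  apply/negP => zL2; apply: (@before_split (pred1 n) (pred1 0) L2 (y0 :: R ++ q)).
  - by rewrite -cat_cons catA -Em2.
  - by rewrite has_pred1.
  - by rewrite has_pred1 -cat_cons mem_cat nR.
apply/and5P; split=> //.
- by rewrite EL2 count_cat /= (count_memPn zNm1) (count_memPn zNL2).
- apply/beforeP => X Y EXY /hasP[z0 zX /eqP z00] /hasP[y yY /= lt_jy]; subst z0.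
  have nNYq : n \notin Y ++ q.
    apply/negP => nYq; apply: (@before_split (pred1 n) (pred1 0) (L2 ++ X) (Y ++ q)).
    + by rewrite -catA (catA X) -EXY catA -Em2.
    + by rewrite has_cat !has_pred1 zX orbT.
    + by rewrite has_pred1.
  have yn : y <= n by rewrite -contents EL EXY !mem_cat yY !(orbT, orTb).
  apply: (no_inversion (X := p ++ m1 ++ 0 :: L2 ++ X) (Y := Y ++ q) (i := y) (j := n)).
  + by rewrite Em Em2 EXY -!catA /= -!catA.
  + exact: ltn_trans j_gt0 lt_jy.
  + by move: nNYq; rewrite mem_cat negb_or => /andP[nNY _]; rewrite ltn_neqAle yn andbT;
      apply: contraNneq nNY => <-.
  + by [].
  + move: nR; rewrite EXY mem_cat => /orP[nX | nY]; last by rewrite mem_cat nY in nNYq.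
    by rewrite !mem_cat inE mem_cat nX !orbT.
  + by rewrite mem_cat yY.
- by apply/hasP; exists y0; rewrite ?inE ?eqxx.
- by move: z_m2; rewrite Em2 mem_cat (negbTE zNL2) has_pred1.
Qed.

Lemma factor_cut : exists z s1 s2 u v j,
  [/\ l = s1 ++ z :: s2, z \notin s1 ++ s2, sg z = u ++ v, j < n
    & btab_pair (above j) (pred1 0) (subst sg s1 ++ u) (v ++ subst sg s2)].
Proof.
have covered i : 0 < i <= n -> i \in subst sg l.
  by case/andP=> i_gt0 le_in; rewrite Em mem_cat inE mem_m2 ?orbT.
have [z [j [k [zl j_gt0 lt_jk le_kn /andP[jz kz]]]]] :=
  pigeonhole_subst lt_l_N lt_N_n covered.
have [s1 [s2 [El zNs1]]] := split_first zl.
have zNs2 : z \notin s2.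
  apply: (before_subst_linear (i := j) (j := k) (s1 := s1)) jz kz.
  by rewrite -El; apply: before_infix (ordered j_gt0 lt_jk le_kn).
have [u [y0 [v [Ez lt_jy0 nu]]]] : exists u y0 v, [/\ sg z = u ++ y0 :: v, j < y0
    & ~~ has (above j) u].
  by apply: split_first_pred; apply/hasP; exists k.
have wE' : w = (p ++ subst sg s1 ++ u) ++ y0 :: v ++ subst sg s2 ++ q.
  by rewrite El subst_cat subst_cons Ez -!catA.
have ju : j \in u.
  move: jz; rewrite Ez mem_cat inE => /or3P[// | /eqP jy0 | jv].
    by rewrite jy0 ltnn in lt_jy0.
  have := @no_greater_before (rcons (p ++ subst sg s1 ++ u) y0) (v ++ subst sg s2 ++ q) j.
  rewrite cat_rcons -wE' mem_cat jv => /(_ erefl j_gt0 isT).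
  by rewrite -cats1 has_cat /= lt_jy0 !orbT.
have nL : ~~ has (above j) (subst sg s1 ++ u).
  rewrite has_cat negb_or nu andbT.
  have := @no_greater_before (p ++ subst sg s1) (u ++ y0 :: v ++ subst sg s2 ++ q) j.
  rewrite (catA (p ++ _) u) -(catA p) -wE' mem_cat ju => /(_ erefl j_gt0 isT).
  by rewrite has_cat negb_or => /andP[].
exists z, s1, s2, u, (y0 :: v), j; split=> //.
- by rewrite mem_cat negb_or zNs1.
- exact: leq_trans lt_jk le_kn.
apply: cut_btab_pair lt_jy0 nL => //.
by rewrite El subst_cat subst_cons Ez -!catA.
Qed.

Lemma zero_split_factor : zero_split n (p ++ subst sg r ++ q).
Proof.
have [z [s1 [s2 [u [v [j [El zNs12 Ez lt_jn pair_l]]]]]]] := factor_cut.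
have [zNs1 zNs2] : z \notin s1 /\ z \notin s2 by apply/andP; rewrite -negb_or -mem_cat.
have gt_neq0 y : j < y -> ~~ pred1 0 y by case: y.
have [r1 [r2 [Er _ _ pair_r]]] := satisfies_btab_pair gt_neq0 Hlr El zNs1 zNs2 Ez pair_l.
have Esr : subst sg r = (subst sg r1 ++ u) ++ (v ++ subst sg r2).
  by rewrite Er subst_cat subst_cons Ez -!catA.
have nNq : n \notin q.
  apply/negP => nq; apply: (before_split n_before_0); by rewrite has_pred1.
rewrite Esr; apply: zero_split_btab_pair pair_r _ => //.
- by move: n_before_0; rewrite before_cat => /and3P[].
- rewrite -Esr -(satisfies_mem _ (satisfies_subst monoidM sg Hlr)).
  by rewrite Em mem_cat inE n_in_m2 !orbT.
Qed.

End FirstZeroInFactor.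

Lemma inS_step n N l r sg p q : satisfies op e l r ->
  (forall y, y \in l -> y < N) -> N < n -> 1 < n ->
  inS n (p ++ subst sg l ++ q) -> inS n (p ++ subst sg r ++ q).
Proof.
move=> Hlr lt_l_N lt_N_n n_gt1 [contents ordered zero_before_one zs].
have Hw := satisfies_ctx monoidM p q (satisfies_subst monoidM sg Hlr).
have n_neq0 : n != 0 by rewrite -lt0n ltnW.
split.
- by move=> c; rewrite -(satisfies_mem _ Hw).
- move=> i j i_gt0 lt_ij le_jn.
  apply: satisfies_before Hw (ordered _ _ i_gt0 lt_ij le_jn).
  by move=> y /eqP->; rewrite /= neq_ltn lt_ij.
- apply: contra zero_before_one.
  by apply: satisfies_before (satisfies_sym Hw) => y /eqP->.
have Hx := satisfies_subst monoidM sg Hlr.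
have [zp | zNp] := boolP (0 \in p); first exact: zero_split_ctx_prefix n_neq0 Hx zp zs.
case: (ltngtP (count_mem 0 (subst sg l)) 1) => [c0 | c2 | c1].
- apply: zero_split_ctx_nozero Hx _ zs; rewrite mem_cat negb_or zNp /=.
  by apply/count_memPn; move: c0; rewrite ltnS leqn0 => /eqP.
- have : 0 \in subst sg l by rewrite -has_pred1 has_count ltnW.
  case/split_first=> m1 [m2 [Em zNm1]].
  have z_m2 : 0 \in m2.
    by rewrite -has_pred1 has_count; move: c2; rewrite Em count_cat (count_memPn zNm1).
  have : zero_split n ((p ++ m1) ++ 0 :: m2 ++ q).
    by rewrite -catA -cat_cons (catA m1) -Em.
  rewrite zero_split_cat; last by rewrite mem_cat negb_or zNp.
  case/and4P; rewrite mem_cat negb_or => /andP[nNp _] n_before_0 n_m2q _.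
  exact: (zero_split_factor Hlr lt_l_N lt_N_n n_gt1 contents ordered zero_before_one Em
    zNp zNm1 nNp n_before_0 n_m2q z_m2).
- exact: zero_split_ctx_once n_neq0 Hx zNp c1 zs.
Qed.
End LambdaTerm.

Lemma mem_squares (y : nat) (s : seq nat) :
  (y \in flatten [seq [:: i; i] | i <- s]) = (y \in s).
Proof. by elim: s => [|x s IH] //=; rewrite !inE IH orbA orbb. Qed.

Lemma idn_lhs_inS n : 1 < n -> inS n (idn_lhs n).
Proof.
move=> n_gt1; rewrite /idn_lhs /squares_prefix; set F := flatten _.
have memF y : (y \in F) = (0 < y < n).
  by rewrite /F mem_squares mem_iota add1n prednK // ltnW.
have n_neq0 : n != 0 by rewrite -lt0n ltnW.
split.
- move=> c; rewrite /= !inE mem_cat memF !inE.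
  by case: c => [|c] //=; case: (ltngtP c.+1 n).
- move=> i j i_gt0 lt_ij le_jn.
  have le_in1 : i <= n.-1 by rewrite -ltnS prednK ?(leq_trans lt_ij) //; lia.
  have Eiota : iota 1 n.-1 = iota 1 i ++ iota i.+1 (n.-1 - i).
    by rewrite -{1}(subnKC le_in1) iotaD add1n.
  rewrite /F Eiota map_cat flatten_cat -cat_cons -catA before_cat.
  rewrite before_nohasD ?before_nohasC ?has_pred1 ?inE ?mem_cat ?mem_squares ?mem_iota;
    try lia.
  apply/negP => /orP[/andP[] | ]; first by rewrite ltnn.
  by rewrite !inE => /or3P[] /eqP Ei; lia.
- by rewrite /= has_cat has_pred1 memF n_gt1.
rewrite /= (zero_split_cat n (w1 := [::])) // !mem_cat !inE !eqxx !orbT andbT /=.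
by rewrite before_cat before_nohasD ?has_pred1 ?memF //= (negbTE n_neq0).
Qed.

Lemma idn_rhs_notinS n : ~ inS n (idn_rhs n).
Proof.
case=> _ _ _; rewrite /idn_rhs /squares_prefix /= (zero_split_cat n (w1 := [::])) //.
case/and4P=> _ + _ _; rewrite -[[:: n; 0; n]]/([:: n; 0] ++ [:: n]) catA => /before_split.
by apply; rewrite has_pred1 ?mem_cat !inE eqxx ?orbT.
Qed.

Theorem mainTheorem11 (M : Type) (op : M -> M -> M) (e : M) :
  is_monoid op e ->
  (forall n : nat, 1 <= n -> satisfies op e (idn_lhs n) (idn_rhs n)) ->
  (exists a b t : nat, [/\ a != b, a != t, b != t &
     lambda_term op e (class_btab a b t)]) ->
  ~ finitely_based op e.
Proof.
move=> monoidM idnM [a [b [t [neq_ab neq_at neq_bt lambdaM]]]] [Sigma [soundS completeS]].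
pose N := (\max_(st <- Sigma) \max_(y <- st.1 ++ st.2) y).+1.
have lt_N st y : st \in Sigma -> y \in st.1 ++ st.2 -> y < N.
  move=> stS yst; rewrite ltnS (leq_trans (leq_bigmax_seq y yst isT)) //.
  exact: (leq_bigmax_seq st stS isT).
have n_gt1 : 1 < N.+1 by [].
have stepS st p q s : st \in Sigma ->
    inS N.+1 (p ++ subst s st.1 ++ q) <-> inS N.+1 (p ++ subst s st.2 ++ q).
  move=> stS; have Hst := soundS _ stS.
  split; [move: Hst | move: (satisfies_sym Hst)] => Hlr;
    apply: (inS_step monoidM neq_ab neq_at neq_bt lambdaM Hlr _ (ltnSn N)) => // y y_st;
    by apply: lt_N stS _; rewrite mem_cat y_st ?orbT.
have [lhs_rhs _] := derivable_invariant stepS (completeS _ _ (idnM N.+1 isT)).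
exact: idn_rhs_notinS (lhs_rhs (idn_lhs_inS n_gt1)).
Qed.
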